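(* Fix a logistic circuit structure over Boolean variables $X_1,\dots,X_k$ and a dataset $\{(\mathbf{x}^{(j)},y^{(j)})\}_{j=1}^N$ with $\mathbf{x}^{(j)}\in[0,1]^k$ and $y^{(j)}\in\{0,1\}$. Let $p_\theta(\mathbf{x})$ denote the probability $\Pr(Y=1\mid\mathbf{x})$ defined by the logistic circuit with parameter vector $\theta$ (the OR-gate wire parameters). Then the cross-entropy loss $L(\theta)=-\sum_{j=1}^N\bigl[y^{(j)}\log p_\theta(\mathbf{x}^{(j)})+(1-y^{(j)})\log(1-p_\theta(\mathbf{x}^{(j)}))\bigr]$ is a convex function of $\theta$.
   Context: A logical circuit over Boolean variables $X_1,\dots,X_k$ is a rooted directed acyclic graph whose leaves are literals $X_i$ or $\neg X_i$ and whose inner nodes are AND gates or OR gates; each node represents a logical sentence. An AND gate is decomposable if its inputs mention pairwise disjoint sets of variables; an OR gate is deterministic if for every complete assignment at most one of its inputs is satisfied. A logistic circuit is a logical circuit whose root is an OR gate, with all AND gates decomposable and all OR gates deterministic, together with a real parameter on each input wire of each OR gate. For $\mathbf{x}\in[0,1]^k$, $\Pr_{\mathbf{x}}$ is the fully factorized distribution with $\Pr_{\mathbf{x}}(X_i=1)=x_i$, and $\Pr_{\mathbf{x}}(n)$ is the probability of the sentence of node $n$. For an OR gate $n$ with child $c$, the flow is $f(n,\mathbf{x},c)=\Pr_{\mathbf{x}}(c)/\Pr_{\mathbf{x}}(n)$ (taken to be $0$ if $\Pr_{\mathbf{x}}(n)=0$). The weight function: $g_n(\mathbf{x})=0$ for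 a leaf; $g_n(\mathbf{x})=\sum_i g_{c_i}(\mathbf{x})$ for an AND gate with children $c_i$; $g_n(\mathbf{x})=\sum_i f(n,\mathbf{x},c_i)(g_{c_i}(\mathbf{x})+\theta_i)$ for an OR gate with inputs $(c_i,\theta_i)$. With root $r$, $\Pr(Y=1\mid\mathbf{x})=1/(1+\exp(-g_r(\mathbf{x})))$. *)

From HB Require Import structures.
From mathcomp Require Import all_boot all_order all_algebra.
From mathcomp Require Import reals sequences exp.
Set Implicit Arguments. Unset Strict Implicit. Unset Printing Implicit Defensive.
Import Order.TTheory GRing.Theory Num.Theory.
Local Open Scope ring_scope.

(* Gate labels of a logical circuit over variables X_0 .. X_{k-1}:
   a literal X_v (pos = true) or ~X_v (pos = false), an AND gate, an OR gate. *)
Inductive gate (k : nat) : Type :=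
| Lit of 'I_k & bool
| AndG
| OrG.
Arguments AndG {k}. Arguments OrG {k}.

Definition is_or k (g : gate k) : bool := if g is OrG then true else false.
Definition is_lit k (g : gate k) : bool := if g is Lit _ _ then true else false.

(* A circuit is a DAG with nodes 'I_n; node i has label [lab i] and
   ordered list of inputs [ch i].  Acyclicity: every input of i has a
   smaller index than i. *)
Definition acyclic n (ch : 'I_n -> seq 'I_n) : Prop :=
  forall i : 'I_n, all (fun c : 'I_n => (c < i)%N) (ch i).

Section Circuit.
Variables (k n : nat) (lab : 'I_n -> gate k) (ch : 'I_n -> seq 'I_n).

Definition assignment := {ffun 'I_k -> bool}.

(* The sentence of a node, as its satisfaction predicate on complete
   assignments.  Defined by fuel recursion; for an acyclic circuit fuel n
   is enough (node i has depth <= i+1 <= n). *)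
Fixpoint sat_f (fuel : nat) (i : 'I_n) (a : assignment) : bool :=
  match fuel with
  | 0 => false
  | f.+1 =>
    match lab i with
    | Lit v pos => a v == pos
    | AndG => all (fun c => sat_f f c a) (ch i)
    | OrG => has (fun c => sat_f f c a) (ch i)
    end
  end.
Definition sat (i : 'I_n) (a : assignment) : bool := sat_f n i a.

Fixpoint mentions_f (fuel : nat) (i : 'I_n) : {set 'I_k} :=
  match fuel with
  | 0 => set0
  | f.+1 =>
    match lab i with
    | Lit v _ => [set v]
    | _ => \bigcup_(c <- ch i) mentions_f f c
    end
  end.
Definition mentions (i : 'I_n) : {set 'I_k} := mentions_f n i.

Definition leaves_ok : Prop :=
  forall i : 'I_n, is_lit (lab i) -> ch i = [::].

Definition decomposable : Prop :=
  forall i : 'I_n, lab i = AndG ->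
  forall j1 j2 : nat, (j1 < size (ch i))%N -> (j2 < size (ch i))%N -> j1 <> j2 ->
    [disjoint mentions (nth i (ch i) j1) & mentions (nth i (ch i) j2)].

Definition deterministic : Prop :=
  forall i : 'I_n, lab i = OrG -> forall a : assignment,
    (count (fun c => sat c a) (ch i) <= 1)%N.

Definition nwires (i : 'I_n) : nat := if is_or (lab i) then size (ch i) else 0%N.
Definition wire := {i : 'I_n & 'I_(nwires i)}.

Variable R : realType.

Definition params := wire -> R.

(* parameter of the j-th input wire of node i (0 if there is no such OR wire) *)
Definition wparam (th : params) (i : 'I_n) (j : nat) : R :=
  match @insub nat (fun m => (m < nwires i)%N) 'I_(nwires i) j with
  | Some j' => th (existT _ i j')
  | None => 0
  end.

(* Pr_x(node) under the fully factorized distribution Pr_x(X_v = 1) = x v *)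
Definition prob (x : 'I_k -> R) (i : 'I_n) : R :=
  \sum_(a : assignment | sat i a) \prod_(v < k) (if a v then x v else 1 - x v).

Definition flow (x : 'I_k -> R) (i c : 'I_n) : R :=
  if prob x i == 0 then 0 else prob x c / prob x i.

Fixpoint weight_f (fuel : nat) (th : params) (x : 'I_k -> R) (i : 'I_n) : R :=
  match fuel with
  | 0 => 0
  | f.+1 =>
    match lab i with
    | Lit _ _ => 0
    | AndG => \sum_(c <- ch i) weight_f f th x c
    | OrG => \sum_(j < size (ch i))
               flow x i (nth i (ch i) j) *
               (weight_f f th x (nth i (ch i) j) + wparam th i j)
    end
  end.
Definition weight (th : params) (x : 'I_k -> R) (i : 'I_n) : R := weight_f n th x i.

Definition prY1 (r : 'I_n) (th : params) (x : 'I_k -> R) : R :=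
  1 / (1 + expR (- weight th x r)).

Definition xent_loss (r : 'I_n) (N : nat) (xs : 'I_N -> 'I_k -> R)
    (ys : 'I_N -> bool) (th : params) : R :=
  - \sum_(j < N) ((ys j)%:R * ln (prY1 r th (xs j))
                  + (1 - (ys j)%:R) * ln (1 - prY1 r th (xs j))).

End Circuit.

Definition convex_fun (T : Type) (R : realType) (L : (T -> R) -> R) : Prop :=
  forall (th1 th2 : T -> R) (t : R), 0 <= t -> t <= 1 ->
    L (fun w => t * th1 w + (1 - t) * th2 w) <= t * L th1 + (1 - t) * L th2.

(* The flows Pr_x(c) / Pr_x(n) do not depend on the parameters, so the root
   weight g_r(x) is a linear function of theta; this holds for any circuit.  Writing
   sp(z) = ln (1 + e^z), the log-likelihood of one example (x, y) is
   -(sp(-g_r(x)) + (1 - y) g_r(x)), so the loss is a sum of convex functions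
   of theta because sp is convex. *)

From HB Require Import structures.
From mathcomp Require Import all_boot all_order all_algebra.
From mathcomp Require Import reals sequences exp.
From mathcomp Require Import interval_inference convex ring.
Import Order.TTheory GRing.Theory Num.Theory.
Local Open Scope ring_scope.

Section Softplus.
Context {R : realType}.

Definition softplus (z : R) : R := ln (1 + expR z).

Lemma add1expR_gt0 (z : R) : 0 < 1 + expR z.
Proof. by rewrite addr_gt0 ?expR_gt0. Qed.

Lemma expR_conv (t x y : R) : 0 <= t -> t <= 1 ->
  expR (t * x + (1 - t) * y) <= t * expR x + (1 - t) * expR y.
Proof.
by move=> t0 t1; have := @convex_expR R (Itv01 t0 t1) x y; rewrite !convRE.
Qed.

Lemma expR_softplus_split (z : R) :
  expR (- softplus z) + expR (z - softplus z) = 1.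
Proof.
rewrite expRD -[X in X + _]mul1r -mulrDl expRN lnK ?posrE ?add1expR_gt0 //.
by rewrite mulfV ?gt_eqF ?add1expR_gt0.
Qed.

(* With S the right-hand side and c the convex combination of a and b,
   convexity of exp bounds e^-S and e^(c - S) by the same convex combinations
   of e^-sp(z) and e^(z - sp(z)), and these add up to 1 by
   [expR_softplus_split]; hence e^-S (1 + e^c) <= 1. *)
Lemma convex_softplus (t a b : R) : 0 <= t -> t <= 1 ->
  softplus (t * a + (1 - t) * b) <= t * softplus a + (1 - t) * softplus b.
Proof.
move=> t0 t1.
set c := t * a + (1 - t) * b; set S := t * softplus a + (1 - t) * softplus b.
have le_1 : expR (- S) <= t * expR (- softplus a) + (1 - t) * expR (- softplus b).
  have -> : - S = t * - softplus a + (1 - t) * - softplus b by rewrite /S; ring.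
  exact: expR_conv.
have le_c : expR (c - S) <=
    t * expR (a - softplus a) + (1 - t) * expR (b - softplus b).
  have -> : c - S = t * (a - softplus a) + (1 - t) * (b - softplus b).
    by rewrite /c /S; ring.
  exact: expR_conv.
have : expR (- S) + expR (c - S) <= 1.
  apply: (le_trans (lerD le_1 le_c)).
  by rewrite addrACA -!mulrDr !expR_softplus_split !mulr1 subrKC.
rewrite expRD -{1}(mul1r (expR (- S))) -mulrDl mulrC expRN.
by rewrite ler_pdivrMl ?expR_gt0 // mulr1 -ler_expR lnK ?posrE ?add1expR_gt0.
Qed.

End Softplus.

Lemma convex_fun_softplus_linear (T : Type) (R : realType)
    (l : (T -> R) -> R) (c : R) :
  (forall th1 th2 t, l (fun w => t * th1 w + (1 - t) * th2 w) =
                     t * l th1 + (1 - t) * l th2) ->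
  convex_fun (fun th => softplus (- l th) + c * l th).
Proof.
move=> l_lin th1 th2 t t0 t1; rewrite l_lin.
have -> : - (t * l th1 + (1 - t) * l th2) = t * - l th1 + (1 - t) * - l th2.
  by ring.
have -> : t * (softplus (- l th1) + c * l th1) +
          (1 - t) * (softplus (- l th2) + c * l th2) =
          t * softplus (- l th1) + (1 - t) * softplus (- l th2) +
          c * (t * l th1 + (1 - t) * l th2) by ring.
by rewrite lerD2r convex_softplus.
Qed.

Section LogisticCircuit.
Variables (R : realType) (k n : nat) (lab : 'I_n -> gate k) (ch : 'I_n -> seq 'I_n).

Lemma wparam_lincomb (th1 th2 : params lab ch R) (a b : R) i j :
  wparam (fun w => a * th1 w + b * th2 w) i j =
  a * wparam th1 i j + b * wparam th2 i j.
Proof. by rewrite /wparam; case: insub => //; rewrite !mulr0 addr0. Qed.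

Lemma weight_f_lincomb fuel (th1 th2 : params lab ch R) (a b : R) x i :
  weight_f fuel (fun w => a * th1 w + b * th2 w) x i =
  a * weight_f fuel th1 x i + b * weight_f fuel th2 x i.
Proof.
elim: fuel i => [|f IH] i /=; first by rewrite !mulr0 addr0.
case: (lab i) => [v pos||]; first by rewrite !mulr0 addr0.
  by rewrite (eq_bigr _ (fun c _ => IH c)) big_split /= -!mulr_sumr.
rewrite !mulr_sumr -big_split /=; apply: eq_bigr => j _.
rewrite IH wparam_lincomb; ring.
Qed.

Lemma log_likelihood_logistic (g y : R) :
  y * ln (1 / (1 + expR (- g))) + (1 - y) * ln (1 - 1 / (1 + expR (- g))) =
  - (softplus (- g) + (1 - y) * g).
Proof.
have E_gt0 := add1expR_gt0 (- g).
have -> : 1 - 1 / (1 + expR (- g)) = expR (- g) / (1 + expR (- g)).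
  by field; rewrite gt_eqF.
rewrite div1r lnV ?posrE // ln_div ?posrE ?expR_gt0 // expRK /softplus; ring.
Qed.

Lemma xent_loss_softplus r N xs ys (th : params lab ch R) :
  xent_loss r xs ys th =
  \sum_(j < N) (softplus (- weight th (xs j) r) +
                (1 - (ys j)%:R) * weight th (xs j) r).
Proof.
rewrite /xent_loss -sumrN; apply: eq_bigr => j _.
by rewrite /prY1 log_likelihood_logistic opprK.
Qed.

End LogisticCircuit.

Theorem corollary1 (R : realType) (k n : nat) (lab : 'I_n -> gate k)
    (ch : 'I_n -> seq 'I_n) (r : 'I_n)
    (Hacyc : acyclic ch) (Hleaves : leaves_ok lab ch)
    (Hdec : decomposable lab ch) (Hdet : deterministic lab ch)
    (Hroot : lab r = OrG)
    (N : nat) (xs : 'I_N -> 'I_k -> R) (ys : 'I_N -> bool)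
    (Hxs : forall (j : 'I_N) (v : 'I_k), 0 <= xs j v <= 1) :
  convex_fun (@xent_loss k n lab ch R r N xs ys).
Proof.
have convex_term j : convex_fun (fun th : params lab ch R =>
    softplus (- weight th (xs j) r) + (1 - (ys j)%:R) * weight th (xs j) r).
  by apply: convex_fun_softplus_linear => th1 th2 t; exact: weight_f_lincomb.
move=> th1 th2 t t0 t1; rewrite !xent_loss_softplus.
rewrite !mulr_sumr -big_split /=; apply: ler_sum => j _.
exact: (convex_term j th1 th2 t t0 t1).
Qed.
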